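(* Let $\Phi$ be a finite crystallographic root system with Weyl group $W$ and let $\beta,\gamma\in\Phi^+$. Then $|W^{(++)}(\beta,\gamma)|=|W^{(--)}(\beta,\gamma)|$ and $|W^{(+-)}(\beta,\gamma)|=|W^{(-+)}(\beta,\gamma)|$. If moreover $\beta\ne\gamma$, then $|W^{(++)}(\beta,\gamma)|=(\operatorname{ord}(\beta,\gamma)-1)\cdot|W^{(+-)}(\beta,\gamma)|$ if $\langle\beta,\gamma\rangle\ge0$, and $|W^{(+-)}(\beta,\gamma)|=(\operatorname{ord}(\beta,\gamma)-1)\cdot|W^{(++)}(\beta,\gamma)|$ if $\langle\beta,\gamma\rangle\le0$. In particular, all four sets $W^{(++)},W^{(--)},W^{(+-)},W^{(-+)}$ have equal cardinality if and only if $\beta$ and $\gamma$ are orthogonal.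
   Context: $\Phi\subset V$ is a finite crystallographic root system in a Euclidean space with inner product $\langle\cdot,\cdot\rangle$, positive roots $\Phi^+$, negative roots $\Phi^-=-\Phi^+$. For signs $\varepsilon,\delta\in\{+,-\}$, $W^{(\varepsilon\delta)}(\beta,\gamma)=\{w\in W : \varepsilon\cdot w(\beta)\in\Phi^+,\ \delta\cdot w(\gamma)\in\Phi^+\}$. $\operatorname{ord}(\beta,\gamma)=\min\{k>0:(s_\beta s_\gamma)^k=e\}$ where $s_\beta$ is the reflection in $\beta$. *)

From HB Require Import structures.
From mathcomp Require Import all_boot all_order all_algebra.
From mathcomp Require Import reals.
Set Implicit Arguments. Unset Strict Implicit. Unset Printing Implicit Defensive.
Import Order.TTheory GRing.Theory Num.Theory.
Local Open Scope ring_scope.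

(* The Euclidean space V is modelled as R^n = 'rV[R]_n with the standard
   inner product; every finite-dimensional Euclidean space is isometric to it.
   Linear maps act on row vectors on the right: w(v) = v *m w. *)

Definition dot (R : realType) (n : nat) (u v : 'rV[R]_n) : R := (u *m v^T) 0 0.

Definition refl_mx (R : realType) (n : nat) (a : 'rV[R]_n) : 'M[R]_n :=
  1%:M - (2 / dot a a) *: (a^T *m a).

Definition root_system (R : realType) (n : nat) (Phi : seq 'rV[R]_n) : Prop :=
  [/\ (0 : 'rV[R]_n) \notin Phi,
      row_full (\matrix_(i < size Phi) Phi`_i),
      (forall a b, a \in Phi -> b \in Phi -> b *m refl_mx a \in Phi),
      (forall a b, a \in Phi -> b \in Phi ->
          exists z : int, 2 * dot b a / dot a a = z%:~R)
    & (forall a (c : R), a \in Phi -> c *: a \in Phi -> c = 1 \/ c = -1)].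

(* A positive system: t is a regular vector (orthogonal to no root) and the
   positive roots are those with <t, a> > 0. *)
Definition regular (R : realType) (n : nat) (Phi : seq 'rV[R]_n) (t : 'rV[R]_n) :=
  forall a, a \in Phi -> dot t a != 0.

Definition posroot (R : realType) (n : nat) (Phi : seq 'rV[R]_n) (t v : 'rV[R]_n) : bool :=
  (v \in Phi) && (0 < dot t v).

(* The Weyl group: the group generated by the reflections s_a, a in Phi
   (a finite group, so the submonoid generated is the whole group). *)
Inductive in_W (R : realType) (n : nat) (Phi : seq 'rV[R]_n) : 'M[R]_n -> Prop :=
  | inW1 : in_W Phi 1%:M
  | inWS a w : a \in Phi -> in_W Phi w -> in_W Phi (w *m refl_mx a).

Definition sgn (R : realType) (n : nat) (eps : bool) (v : 'rV[R]_n) : 'rV[R]_n :=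
  if eps then v else - v.

(* W^(eps delta)(beta, gamma); eps = true means '+', false means '-'. *)
Definition Wsign (R : realType) (n : nat) (Phi : seq 'rV[R]_n) (t : 'rV[R]_n)
  (eps delta : bool) (beta gamma : 'rV[R]_n) (w : 'M[R]_n) : Prop :=
  [/\ in_W Phi w, posroot Phi t (sgn eps (beta *m w))
    & posroot Phi t (sgn delta (gamma *m w))].

Definition has_card (T : eqType) (P : T -> Prop) (k : nat) : Prop :=
  exists s : seq T, [/\ uniq s, (forall x, x \in s <-> P x) & size s = k].

Definition is_order (R : realType) (n : nat) (M : 'M[R]_n) (k : nat) : Prop :=
  [/\ (0 < k)%N, iter k (mulmx M) 1%:M = 1%:M
    & forall j, (0 < j < k)%N -> iter j (mulmx M) 1%:M <> 1%:M].

From HB Require Import structures.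
From mathcomp Require Import all_boot all_order all_algebra.
From mathcomp Require Import boolp reals.
From mathcomp Require Import ring lra zify.
Import Order.TTheory GRing.Theory Num.Theory.
Set Implicit Arguments. Unset Strict Implicit. Unset Printing Implicit Defensive.
Local Open Scope ring_scope.

(* Left multiplication by the dihedral subgroup D = <s_beta, s_gamma>, of order 2k with
   k = ord(beta, gamma), permutes W, so 2k |W^(eps delta)| is the sum over w in W of the
   number of d in D with d w in W^(eps delta).  Writing x = <t, beta w> and y = <t, gamma w>,
   the numbers <t, beta d w> and <t, gamma d w> are integral linear forms in (x, y) that only
   depend on the Cartan integers of beta and gamma.  These take one of eleven values (or
   beta = gamma), and in each case a sign analysis over the chambers of the rank-2 arrangement
   shows that the number of such d is k - 1 or 1 for every w, according to whether the signs
   (eps, delta) agree with the sign of <beta, gamma>.  Hence |W^(eps delta)| = |W| c / 2k with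
   c in {1, k - 1}, and all the relations follow. *)

Lemma enum_of_code (T : eqType) (F : finType) (P : T -> Prop) (c : T -> F) :
  (forall x y, P x -> P y -> c x = c y -> x = y) ->
  exists s : seq T, uniq s /\ forall x, x \in s <-> P x.
Proof.
move=> c_inj.
suff [s [s_uniq sE]] : exists s : seq T,
    uniq s /\ forall x, x \in s <-> P x /\ c x \in enum F.
  by exists s; split=> // x; rewrite sE mem_enum; split=> [[]|].
elim: (enum F) (enum_uniq F) => [_|y l IH /= /andP[yNl /IH[s [s_uniq sE]]]].
  by exists [::]; split=> // x; split=> [|[]].
have [[x0 [Px0 cx0]] | no_y] := pselect (exists x, P x /\ c x = y).
  exists (x0 :: s); split=> [|x].
    by rewrite /= s_uniq andbT; apply/negP=> /sE[_]; rewrite cx0 (negbTE yNl).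
  rewrite !in_cons; split=> [/orP[/eqP-> | /sE[Px ->]] | [Px /orP[/eqP cx | cxl]]].
  - by rewrite cx0 eqxx.
  - by rewrite orbT.
  - by rewrite (c_inj x x0) ?eqxx // cx cx0.
  - by apply/orP; right; apply/sE.
exists s; split=> // x; rewrite in_cons; split=> [/sE[Px ->] | [Px /orP[/eqP cx | cxl]]].
- by rewrite orbT.
- by case: no_y; exists x.
- exact/sE.
Qed.

Lemma has_card_count (T : eqType) (P : T -> Prop) (s : seq T) :
  uniq s -> (forall x, P x -> x \in s) -> has_card P (count (fun x => `[< P x >]) s).
Proof.
move=> s_uniq sP; exists [seq x <- s | `[< P x >]]; split.
- exact: filter_uniq.
- move=> x; rewrite mem_filter; split=> [/andP[/asboolP] // | Px].
  by rewrite sP // andbT; exact/asboolP.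
- by rewrite size_filter.
Qed.

Lemma double_count (T D : eqType) (s : seq T) (ds : seq D) (act : D -> T -> T)
    (q : pred T) (c : nat) :
  uniq s -> (forall d, d \in ds -> perm_eq [seq act d x | x <- s] s) ->
  (forall x, x \in s -> count (fun d => q (act d x)) ds = c) ->
  (size ds * count q s = size s * c)%N.
Proof.
move=> s_uniq act_perm qc.
have count_sum (I : Type) (p : pred I) r : count p r = (\sum_(i <- r) p i)%N.
  by rewrite -sum1_count big_mkcond.
transitivity (\sum_(x <- s) count (fun d => q (act d x)) ds)%N; last first.
  by rewrite (eq_big_seq (fun=> c)) // big_const_seq count_predT iter_addn_0 mulnC.
under eq_bigr do rewrite count_sum.
rewrite exchange_big /= (eq_big_seq (fun=> count q s)).
  by rewrite big_const_seq count_predT iter_addn_0 mulnC.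
by move=> d /act_perm /permP pe; rewrite -count_sum -(count_map (act d)) pe.
Qed.

Section InnerProduct.
Variables (R : realType) (n : nat).
Implicit Types u v w : 'rV[R]_n.

Lemma dotC u v : dot u v = dot v u.
Proof. by rewrite /dot -[u *m v^T]trmxK trmx_mul trmxK mxE. Qed.

Lemma dotDl u v w : dot (u + v) w = dot u w + dot v w.
Proof. by rewrite /dot mulmxDl mxE. Qed.

Lemma dotZl (c : R) u w : dot (c *: u) w = c * dot u w.
Proof. by rewrite /dot -scalemxAl mxE. Qed.

Lemma dotNl u w : dot (- u) w = - dot u w.
Proof. by rewrite /dot mulNmx mxE. Qed.

Lemma dot0l w : dot 0 w = 0.
Proof. by rewrite /dot mul0mx mxE. Qed.

Lemma dotDr u v w : dot w (u + v) = dot w u + dot w v.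
Proof. by rewrite dotC dotDl !(dotC w). Qed.

Lemma dotZr (c : R) u w : dot w (c *: u) = c * dot w u.
Proof. by rewrite dotC dotZl dotC. Qed.

Lemma dotNr u w : dot w (- u) = - dot w u.
Proof. by rewrite dotC dotNl dotC. Qed.

Lemma dot_self_ge0 u : 0 <= dot u u.
Proof. by rewrite /dot mxE sumr_ge0 // => i _; rewrite mxE -expr2 sqr_ge0. Qed.

Lemma dot_self_eq0 u : (dot u u == 0) = (u == 0).
Proof.
apply/idP/eqP=> [|->]; last by rewrite dot0l.
rewrite /dot mxE psumr_eq0 => [/allP u0|i _]; last by rewrite mxE -expr2 sqr_ge0.
apply/rowP=> j; have := u0 j (mem_index_enum j).
by rewrite !mxE mulf_eq0 orbb => /eqP.
Qed.

Lemma dot_self_gt0 u : (0 < dot u u) = (u != 0).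
Proof. by rewrite lt_def dot_self_eq0 dot_self_ge0 andbT. Qed.

End InnerProduct.

Definition cartan (R : realType) (n : nat) (a v : 'rV[R]_n) : R := 2 * dot v a / dot a a.

Section Reflections.
Variables (R : realType) (n : nat).
Implicit Types a u v : 'rV[R]_n.

Lemma cartanD a u v : cartan a (u + v) = cartan a u + cartan a v.
Proof. by rewrite /cartan dotDl; ring. Qed.

Lemma cartanZ a (c : R) v : cartan a (c *: v) = c * cartan a v.
Proof. by rewrite /cartan dotZl; ring. Qed.

Lemma cartanN a v : cartan a (- v) = - cartan a v.
Proof. by rewrite /cartan dotNl; ring. Qed.

Lemma cartan0 a : cartan a 0 = 0.
Proof. by rewrite /cartan dot0l !mulr0 mul0r. Qed.

Lemma cartan_id a : a != 0 -> cartan a a = 2.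
Proof. by move=> a0; rewrite /cartan mulfK // lt0r_neq0 // dot_self_gt0. Qed.

Lemma cartanE a v : cartan a v = dot v a * (2 / dot a a).
Proof. by rewrite /cartan mulrA [dot v a * 2]mulrC. Qed.

Lemma refl_mxE a v : v *m refl_mx a = v - cartan a v *: a.
Proof.
rewrite /refl_mx mulmxBr mulmx1 -scalemxAr mulmxA [v *m a^T]mx11_scalar.
by rewrite mul_scalar_mx scalerA /cartan /dot mulrAC.
Qed.

Lemma refl_mx_root a : a != 0 -> a *m refl_mx a = - a.
Proof. by move=> a0; rewrite refl_mxE cartan_id // scaler_nat mulr2n opprD addNKr. Qed.

Lemma refl_mxK a : a != 0 -> refl_mx a *m refl_mx a = 1%:M.
Proof.
move=> a0; apply/eqP/mulmxP=> v; rewrite mulmxA mulmx1 !refl_mxE.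
rewrite cartanD cartanN cartanZ cartan_id //.
by apply/rowP=> i; rewrite !mxE; ring.
Qed.

End Reflections.

Section RootSystem.
Variables (R : realType) (n : nat) (Phi : seq 'rV[R]_n).
Hypothesis rsPhi : root_system Phi.

Lemma root_neq0 a : a \in Phi -> a != 0.
Proof. by case: rsPhi => Phi0 _ _ _ _; apply: contraTneq => ->. Qed.

Lemma root_opp a : a \in Phi -> - a \in Phi.
Proof.
move=> aPhi; rewrite -refl_mx_root ?root_neq0 //.
by case: rsPhi => _ _ reflPhi _ _; exact: reflPhi.
Qed.

Lemma in_W_mulmx w1 w2 : in_W Phi w1 -> in_W Phi w2 -> in_W Phi (w1 *m w2).
Proof.
move=> W1; elim=> [|a w aPhi _ IH]; first by rewrite mulmx1.
by rewrite mulmxA; exact: inWS.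
Qed.

Lemma in_W_refl a : a \in Phi -> in_W Phi (refl_mx a).
Proof. by move=> aPhi; rewrite -[refl_mx a]mul1mx; apply: inWS => //; exact: inW1. Qed.

Lemma root_mulmx_W w u : in_W Phi w -> u \in Phi -> u *m w \in Phi.
Proof.
case: rsPhi => _ _ reflPhi _ _; elim=> [|a w' aPhi _ IH] uPhi; first by rewrite mulmx1.
by rewrite mulmxA; apply: reflPhi => //; exact: IH.
Qed.

(* An element of W is determined by the permutation it induces on the spanning set Phi. *)
Lemma weyl_enum : exists s : seq 'M[R]_n, uniq s /\ forall w, w \in s <-> in_W Phi w.
Proof.
pose N := size Phi.
pose code w : {ffun 'I_N -> 'I_N.+1} := [ffun i : 'I_N => inord (index (Phi`_i *m w) Phi)].
apply: (@enum_of_code _ _ _ code) => w1 w2 W1 W2 /ffunP code12.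
have rows_eq (i : 'I_N) : Phi`_i *m w1 = Phi`_i *m w2.
  have /(congr1 val) := code12 i; rewrite !ffunE /= !inordK ?ltnS ?index_size //.
  have rPhi w : in_W Phi w -> Phi`_i *m w \in Phi.
    by move=> Ww; apply: root_mulmx_W => //; exact: mem_nth.
  by move=> index_eq; rewrite -(nth_index 0 (rPhi _ W1)) index_eq nth_index ?rPhi.
case: rsPhi => _ /row_fullP[B BPhi] _ _ _.
rewrite -[w1]mul1mx -[w2]mul1mx -BPhi -!mulmxA; congr (B *m _).
by apply/row_matrixP=> i; rewrite !row_mul rowK rows_eq.
Qed.

End RootSystem.

Section DihedralWords.
Variables (R : realType) (n : nat) (b g : 'rV[R]_n).

Fixpoint dword (s : seq bool) : 'M[R]_n :=
  if s is h :: s' then refl_mx (if h then b else g) *m dword s' else 1%:M.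

Lemma dword_cat s1 s2 : dword (s1 ++ s2) = dword s1 *m dword s2.
Proof. by elim: s1 => [|h s IH] /=; rewrite ?mul1mx // IH mulmxA. Qed.

Lemma in_W_dword (Phi : seq 'rV[R]_n) s :
  root_system Phi -> b \in Phi -> g \in Phi -> in_W Phi (dword s).
Proof.
move=> rsPhi bPhi gPhi; elim: s => [|h s IH] /=; first exact: inW1.
by apply: in_W_mulmx => //; apply: in_W_refl; case: h.
Qed.

Hypotheses (b0 : b != 0) (g0 : g != 0).

Lemma dword_revK s : dword (rev s) *m dword s = 1%:M.
Proof.
elim: s => [|h s IH] /=; first by rewrite mulmx1.
rewrite rev_cons -cats1 dword_cat /= mulmx1 -mulmxA (mulmxA (refl_mx _)).
by rewrite refl_mxK ?mul1mx //; case: h.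
Qed.

Lemma dword_revKV s : dword s *m dword (rev s) = 1%:M.
Proof. by rewrite -{1}(revK s) dword_revK. Qed.

End DihedralWords.

Definition rotation_word (j : nat) : seq bool := flatten (nseq j [:: true; false]).

Lemma iter_refl_prod (R : realType) (n : nat) (b g : 'rV[R]_n) j :
  iter j (mulmx (refl_mx b *m refl_mx g)) 1%:M = dword b g (rotation_word j).
Proof. by elim: j => [|j IH] //=; rewrite IH !mulmxA. Qed.

Fixpoint alt_word (h : bool) (L : nat) : seq bool :=
  if L is L'.+1 then h :: alt_word (~~ h) L' else [::].

(* Reduced words for the 2k elements of <s_b, s_g> when s_b s_g has order k. *)
Definition dihedral_words (k : nat) : seq (seq bool) :=
  [::] :: flatten [seq [:: alt_word true L; alt_word false L] | L <- iota 1 k.-1]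
       ++ [:: alt_word true k].

Lemma size_dihedral_words k : (0 < k)%N -> size (dihedral_words k) = (2 * k)%N.
Proof.
move=> k_gt0; rewrite /= size_cat size_flatten /shape -map_comp.
rewrite (eq_map (_ : _ =1 fun=> 2%N)) // sumnE big_map big_const_seq count_predT.
by rewrite size_iota iter_addn_0 /=; lia.
Qed.

Section WordCoords.
Variables (V : zmodType) (za zb : int) (P Q : V).

(* (x, y) stands for v + x b + y g, where P = <v, b^vee>, Q = <v, g^vee>,
   za = <b, g^vee> and zb = <g, b^vee>. *)
Definition refl_coords (h : bool) (xy : V * V) : V * V :=
  if h then (- P - xy.1 - xy.2 *~ zb, xy.2) else (xy.1, - Q - xy.2 - xy.1 *~ za).

Definition word_coords (s : seq bool) (xy : V * V) : V * V :=
  foldl (fun xy h => refl_coords h xy) xy s.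

End WordCoords.

Lemma word_coords_morph (U V : zmodType) (f : {additive U -> V}) za zb P Q s (x y : U) :
  word_coords za zb (f P) (f Q) s (f x, f y)
  = ((f (word_coords za zb P Q s (x, y)).1), f (word_coords za zb P Q s (x, y)).2).
Proof.
by elim: s x y => [|[] s IH] x y //=; rewrite -IH /refl_coords /= !raddfB raddfN raddfMz.
Qed.

Definition comb2 (V : zmodType) (P Q : V) (pq : int * int) : V := P *~ pq.1 + Q *~ pq.2.

Lemma comb2_is_zmod_morphism (V : zmodType) (P Q : V) : zmod_morphism (comb2 P Q).
Proof. by move=> [p q] [p' q']; rewrite /comb2 /= !mulrzBr addrACA opprD. Qed.

Lemma comb2_e1 (V : zmodType) (P Q : V) : comb2 P Q (1, 0) = P.
Proof. by rewrite /comb2 /= mulr1z mulr0z addr0. Qed.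

Lemma comb2_e2 (V : zmodType) (P Q : V) : comb2 P Q (0, 1) = Q.
Proof. by rewrite /comb2 /= mulr1z mulr0z add0r. Qed.

HB.instance Definition _ (V : zmodType) (P Q : V) :=
  GRing.isZmodMorphism.Build _ _ (comb2 P Q) (comb2_is_zmod_morphism P Q).

Section WordGeometry.
Variables (R : realType) (n : nat) (b g : 'rV[R]_n) (za zb : int).
Hypotheses (b0 : b != 0) (g0 : g != 0).
Hypotheses (Eza : cartan g b = za%:~R) (Ezb : cartan b g = zb%:~R).

Lemma dword_coords v s (x y : R) :
  (v + x *: b + y *: g) *m dword b g s =
  v + (word_coords za zb (cartan b v) (cartan g v) s (x, y)).1 *: b
    + (word_coords za zb (cartan b v) (cartan g v) s (x, y)).2 *: g.
Proof.
elim: s x y => [|h s IH] x y /=; first by rewrite mulmx1.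
rewrite mulmxA /refl_coords; case: h; rewrite -IH refl_mxE !cartanD !cartanZ cartan_id //.
all: by rewrite ?Eza ?Ezb /=; congr (_ *m _); apply/rowP=> j; rewrite !mxE; ring.
Qed.

Lemma dword_span s (x y : int) :
  (x%:~R *: b + y%:~R *: g) *m dword b g s =
  (word_coords za zb 0 0 s (x, y)).1%:~R *: b + (word_coords za zb 0 0 s (x, y)).2%:~R *: g.
Proof.
have := dword_coords 0 s x%:~R y%:~R; rewrite add0r !cartan0 => ->; rewrite add0r.
by have /= := word_coords_morph ( *~%R (1 : R)) za zb 0 0 s x y; rewrite !mulr0z => ->.
Qed.

Lemma dword_rotation_id k :
  word_coords za zb ((1, 0) : int * int) (0, 1) (rotation_word k) (0, 0) = (0, 0) ->
  dword b g (rotation_word k) = 1%:M.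
Proof.
move=> Ek; apply/eqP/mulmxP=> v; rewrite mulmx1.
have := dword_coords v (rotation_word k) 0 0; rewrite !scale0r !addr0 => ->.
have /= := word_coords_morph (comb2 (cartan b v) (cartan g v)) za zb (1, 0) (0, 1)
  (rotation_word k) 0 0.
by rewrite Ek !raddf0 comb2_e1 comb2_e2 => ->; rewrite !scale0r !addr0.
Qed.

Lemma span_eq0 x y :
  x *: b + y *: g = 0 -> 2 * x + zb%:~R * y = 0 /\ za%:~R * x + 2 * y = 0.
Proof.
move=> E; have Bn : dot b b != 0 by rewrite lt0r_neq0 ?dot_self_gt0.
have Gn : dot g g != 0 by rewrite lt0r_neq0 ?dot_self_gt0.
have := congr1 (fun u => dot u b) E; have := congr1 (fun u => dot u g) E.
rewrite /= !dotDl !dotZl !dot0l -Eza -Ezb /cartan (dotC g b) => Eg Eb; split.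
  by apply: (mulfI Bn); rewrite mulr0 -(mulr0 2) -Eb; field.
by apply: (mulfI Gn); rewrite mulr0 -(mulr0 2) -Eg; field.
Qed.

Lemma dword_fix_b s : b *m dword b g s = b ->
  let c := word_coords za zb 0 0 s (1, 0) in
  (2 * (c.1 - 1) + zb * c.2 = 0) /\ (za * (c.1 - 1) + 2 * c.2 = 0).
Proof.
move: (dword_span s 1 0); rewrite scale1r scale0r addr0 => -> fix_b c.
have /span_eq0[] : (c.1 - 1)%:~R *: b + c.2%:~R *: g = 0.
  by rewrite intrB scalerBl addrAC fix_b scale1r subrr.
by move=> Eb Eg; split; apply/eqP; rewrite -(intr_eq0 R) intrD !intrM; apply/eqP.
Qed.

End WordGeometry.

(* The k-th power of s_b s_g is the identity (its action on v + x b + y g is computed symbolically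
   in P and Q, over int * int), and no smaller positive power fixes b. *)
Definition order_check (za zb : int) (k : nat) : bool :=
  [&& (0 < k)%N,
      word_coords za zb ((1, 0) : int * int) (0, 1) (rotation_word k) (0, 0) == (0, 0)
    & all (fun j => let c := word_coords za zb (0 : int) 0 (rotation_word j) (1, 0) in
             ~~ ((2 * (c.1 - 1) + zb * c.2 == 0) && (za * (c.1 - 1) + 2 * c.2 == 0)))
          (iota 1 k.-1)].

Lemma is_order_check (R : realType) (n : nat) (b g : 'rV[R]_n) (za zb : int) k :
  b != 0 -> g != 0 -> cartan g b = za%:~R -> cartan b g = zb%:~R ->
  order_check za zb k -> is_order (refl_mx b *m refl_mx g) k.
Proof.
move=> b0 g0 Eza Ezb /and3P[k_gt0 /eqP Ek /allP no_fix]; split=> // [|j /andP[j_gt0 j_lt_k]].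
  by rewrite iter_refl_prod (dword_rotation_id b0 g0 Eza Ezb Ek).
rewrite iter_refl_prod => Ej.
have /no_fix/negP[] : j \in iota 1 k.-1 by rewrite mem_iota j_gt0 add1n prednK.
have /(dword_fix_b b0 g0 Eza Ezb)[-> ->] : b *m dword b g (rotation_word j) = b.
  by rewrite Ej mulmx1.
by rewrite eqxx.
Qed.

Section SignCount.
Variable R : realFieldType.

Definition linform (c : int * int) (x y : R) : R := c.1%:~R * x + c.2%:~R * y.

Definition has_sign (e : bool) (r : R) : bool := if e then 0 < r else r < 0.

Definition sign_count (L : seq ((int * int) * (int * int))) (x y : R) (e f : bool) : nat :=
  count (fun c => has_sign e (linform c.1 x y) && has_sign f (linform c.2 x y)) L.

End SignCount.

Definition canon_form (c : int * int) : bool * (int * int) :=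
  if (0 < c.1) || ((c.1 == 0) && (0 < c.2)) then (true, c) else (false, (- c.1, - c.2)).

Definition canon_data (L : seq ((int * int) * (int * int))) :=
  [seq (canon_form c.1, canon_form c.2) | c <- L].

(* The lines through the origin cut out by the forms of L, one normalized form per line. *)
Definition lines (L : seq ((int * int) * (int * int))) : seq (int * int) :=
  undup [seq (canon_form c).2 | c <- flatten [seq [:: p.1; p.2] | p <- L]].

Section CanonForms.
Variable R : realFieldType.
Implicit Types (x y : R) (L : seq ((int * int) * (int * int))).

Lemma linform_canon c x y :
  linform c x y =
  if (canon_form c).1 then linform (canon_form c).2 x y else - linform (canon_form c).2 x y.
Proof.
by rewrite /canon_form; case: (_ || _); rewrite //= /linform !intrN !mulNr opprD !opprK.
Qed.

Lemma has_sign_canon e c x y :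
  has_sign e (linform c x y) = has_sign (e == (canon_form c).1) (linform (canon_form c).2 x y).
Proof.
by rewrite linform_canon; case: (canon_form c).1; case: e; rewrite /has_sign ?oppr_gt0 ?oppr_lt0.
Qed.

Lemma sign_count_canon L x y e f :
  sign_count L x y e f =
  count (fun c => has_sign (e == c.1.1) (linform c.1.2 x y) &&
                  has_sign (f == c.2.1) (linform c.2.2 x y))
    (canon_data L).
Proof.
rewrite count_map; apply: eq_count => -[c1 c2] /=.
by rewrite (has_sign_canon e c1) (has_sign_canon f c2).
Qed.

Lemma linform_canon_eq0 c x y : (linform (canon_form c).2 x y == 0) = (linform c x y == 0).
Proof. by rewrite [in RHS]linform_canon; case: ifP; rewrite ?oppr_eq0. Qed.

Lemma lines_neq0 L x y :
  all (fun c => (linform c.1 x y != 0) && (linform c.2 x y != 0)) L ->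
  all (fun c => linform c x y != 0) (lines L).
Proof.
move=> /allP L_neq0; apply/allP=> _ /[!mem_undup] /mapP[c /flattenP[_ /mapP[p pL ->] cp] ->].
rewrite linform_canon_eq0; have /andP[p1 p2] := L_neq0 p pL.
by move: cp; rewrite !inE => /orP[] /eqP->.
Qed.

End CanonForms.

Definition orbit_profile (k : nat) (acute : bool) (e f : bool) : nat :=
  if (e == f) == acute then k.-1 else 1.

(* The forms giving <t, b d w> and <t, g d w> in terms of <t, b w> and <t, g w>. *)
Definition dihedral_data (za zb : int) (k : nat) : seq ((int * int) * (int * int)) :=
  [seq (word_coords za zb (0 : int) 0 d (1, 0), word_coords za zb (0 : int) 0 d (0, 1))
  | d <- dihedral_words k].

Definition rank2_case (za zb : int) (k : nat) (acute : bool) : Prop :=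
  order_check za zb k /\
  forall (R : realFieldType) (x y : R),
    all (fun c => linform c x y != 0) (lines (dihedral_data za zb k)) ->
    forall e f, sign_count (dihedral_data za zb k) x y e f = orbit_profile k acute e f.

(* Split on the sign of each line, discarding infeasible sign patterns with lra: each surviving
   branch is a chamber, where the sign of every form is read off the hypotheses. *)
Ltac split_signs nz :=
  lazymatch type of nz with
  | is_true ((_ != 0) && _) =>
      case/andP: nz; rewrite neq_lt => /orP[? | ?] nz; try (exfalso; lra); split_signs nz
  | _ => idtac
  end.

Ltac decide_signs :=
  repeat match goal with h : is_true (_ < _) |- _ => rewrite ?h ?(lt_gtF h); clear h end.

Ltac solve_sign_count :=
  let x := fresh "x" in let y := fresh "y" in let nz := fresh "nz" in
  let e := fresh "e" in let f := fresh "f" in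
  move=> ? x y nz e f; rewrite sign_count_canon;
  match goal with |- context [canon_data ?L] =>
    let L' := eval vm_compute in (canon_data L) in
    rewrite (_ : canon_data L = L'); last by vm_compute
  end;
  match type of nz with context [lines ?L] =>
    let L' := eval vm_compute in (lines L) in
    rewrite (_ : lines L = L') in nz; last by vm_compute
  end;
  rewrite /= /linform /has_sign /= in nz *;
  split_signs nz; decide_signs; by case: e; case: f.

Ltac solve_rank2_case := split; [by vm_compute | solve_sign_count].

(* <b, g^vee> <g, b^vee> is 4 cos^2 of the angle of b and g, which fixes the order of s_b s_g. *)
Definition dihedral_order (p : int) : nat :=
  if p == 0 then 2 else if p == 1 then 3 else if p == 2 then 4 else 6.

Lemma dihedral_order_eq2 (p : int) : (dihedral_order p == 2) = (p == 0).
Proof. by rewrite /dihedral_order; case: (p == 0); case: (p == 1); case: (p == 2). Qed.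

Lemma rank2_case_00 : rank2_case 0 0 2 false. Proof. solve_rank2_case. Qed.
Lemma rank2_case_11 : rank2_case 1 1 3 true. Proof. solve_rank2_case. Qed.
Lemma rank2_case_N11 : rank2_case (-1) (-1) 3 false. Proof. solve_rank2_case. Qed.
Lemma rank2_case_12 : rank2_case 1 2 4 true. Proof. solve_rank2_case. Qed.
Lemma rank2_case_N12 : rank2_case (-1) (-2) 4 false. Proof. solve_rank2_case. Qed.
Lemma rank2_case_21 : rank2_case 2 1 4 true. Proof. solve_rank2_case. Qed.
Lemma rank2_case_N21 : rank2_case (-2) (-1) 4 false. Proof. solve_rank2_case. Qed.
Lemma rank2_case_13 : rank2_case 1 3 6 true. Proof. solve_rank2_case. Qed.
Lemma rank2_case_N13 : rank2_case (-1) (-3) 6 false. Proof. solve_rank2_case. Qed.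
Lemma rank2_case_31 : rank2_case 3 1 6 true. Proof. solve_rank2_case. Qed.
Lemma rank2_case_N31 : rank2_case (-3) (-1) 6 false. Proof. solve_rank2_case. Qed.

Lemma rank2_cases (za zb : int) :
  za * zb < 4 -> (0 < za) = (0 < zb) -> (za < 0) = (zb < 0) ->
  rank2_case za zb (dihedral_order (za * zb)) (0 < za).
Proof.
move=> prod_lt4 pos neg; have : (-3 <= za <= 3) && (-3 <= zb <= 3) by nia.
move: prod_lt4 pos neg; case: za => [[|[|[|[|?]]]]|[|[|[|?]]]];
  case: zb => [[|[|[|[|?]]]]|[|[|[|?]]]] // _ _ _ _.
- exact: rank2_case_00.
- exact: rank2_case_11.
- exact: rank2_case_12.
- exact: rank2_case_13.
- exact: rank2_case_21.
- exact: rank2_case_31.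
- exact: rank2_case_N11.
- exact: rank2_case_N12.
- exact: rank2_case_N13.
- exact: rank2_case_N21.
- exact: rank2_case_N31.
Qed.

Section OrbitCount.
Variables (R : realType) (n : nat) (Phi : seq 'rV[R]_n) (t : 'rV[R]_n).
Hypotheses (rsPhi : root_system Phi) (reg : regular Phi t).

Lemma posroot_sgn e u : u \in Phi -> posroot Phi t (sgn e u) = has_sign e (dot t u).
Proof.
move=> uPhi; rewrite /posroot /sgn /has_sign; case: e; first by rewrite uPhi.
by rewrite root_opp // dotNr oppr_gt0.
Qed.

Variables (b g : 'rV[R]_n) (za zb : int).
Hypotheses (bPhi : b \in Phi) (gPhi : g \in Phi).
Hypotheses (Eza : cartan g b = za%:~R) (Ezb : cartan b g = zb%:~R).

Let b0 := root_neq0 rsPhi bPhi.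
Let g0 := root_neq0 rsPhi gPhi.

Lemma dot_dword d w (xy : int * int) :
  dot t ((xy.1%:~R *: b + xy.2%:~R *: g) *m (dword b g d *m w)) =
  linform (word_coords za zb 0 0 d xy) (dot t (b *m w)) (dot t (g *m w)).
Proof.
case: xy => x y; rewrite mulmxA (dword_span b0 g0 Eza Ezb).
by rewrite mulmxDl -!scalemxAl dotDr !dotZr.
Qed.

Lemma dot_dword_b d w :
  dot t (b *m (dword b g d *m w)) =
  linform (word_coords za zb 0 0 d (1, 0)) (dot t (b *m w)) (dot t (g *m w)).
Proof. by rewrite -dot_dword /= scale1r scale0r addr0. Qed.

Lemma dot_dword_g d w :
  dot t (g *m (dword b g d *m w)) =
  linform (word_coords za zb 0 0 d (0, 1)) (dot t (b *m w)) (dot t (g *m w)).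
Proof. by rewrite -dot_dword /= scale1r scale0r add0r. Qed.

Lemma count_orbit_Wsign w ds e f : in_W Phi w ->
  count (fun d => `[< Wsign Phi t e f b g (dword b g d *m w) >]) ds =
  sign_count [seq (word_coords za zb 0 0 d (1, 0), word_coords za zb 0 0 d (0, 1)) | d <- ds]
    (dot t (b *m w)) (dot t (g *m w)) e f.
Proof.
move=> Ww; rewrite /sign_count count_map; apply: eq_count => d /=.
have Wdw : in_W Phi (dword b g d *m w) by apply: in_W_mulmx => //; exact: in_W_dword.
apply: (asbool_equiv_eqP idP); rewrite /Wsign !posroot_sgn ?root_mulmx_W //.
rewrite dot_dword_b dot_dword_g; split=> [[_ -> ->] // | /andP[]].
by split.
Qed.

Lemma orbit_forms_neq0 w ds : in_W Phi w ->
  all (fun c => (linform c.1 (dot t (b *m w)) (dot t (g *m w)) != 0) &&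
                (linform c.2 (dot t (b *m w)) (dot t (g *m w)) != 0))
    [seq (word_coords za zb 0 0 d (1, 0), word_coords za zb 0 0 d (0, 1)) | d <- ds].
Proof.
move=> Ww; apply/allP=> _ /mapP[d _ ->] /=; rewrite -dot_dword_b -dot_dword_g.
have Wdw : in_W Phi (dword b g d *m w) by apply: in_W_mulmx => //; exact: in_W_dword.
by rewrite !reg ?root_mulmx_W.
Qed.

Lemma orbit_count_rank2 k acute : rank2_case za zb k acute ->
  forall w, in_W Phi w -> forall e f,
  count (fun d => `[< Wsign Phi t e f b g (dword b g d *m w) >]) (dihedral_words k) =
  orbit_profile k acute e f.
Proof.
case=> _ sign_cnt w Ww e f; rewrite count_orbit_Wsign //.
by apply: sign_cnt; apply: lines_neq0; exact: orbit_forms_neq0.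
Qed.

End OrbitCount.

Lemma sgz_cartan (R : realType) (n : nat) (a v : 'rV[R]_n) :
  a != 0 -> sgz (cartan a v) = sgz (dot v a).
Proof.
move=> a0; have a_pos : 0 < 2 / dot a a by rewrite divr_gt0 ?dot_self_gt0.
by rewrite cartanE sgzM (gtr0_sgz a_pos) mulr1.
Qed.

Lemma dot_sqr_eq (R : realType) (n : nat) (b g : 'rV[R]_n) :
  b != 0 -> dot b b * dot g g <= dot b g ^+ 2 -> g = (dot b g / dot b b) *: b.
Proof.
move=> b0 le_bg; have Bp : 0 < dot b b by rewrite dot_self_gt0.
set B := dot b b in Bp le_bg *; set G := dot g g in le_bg; set D := dot b g in le_bg *.
pose u := B *: g - D *: b.
have uu : dot u u = B * (B * G - D ^+ 2).
  by rewrite /u !dotDl !dotDr !dotNl !dotNr !dotZl !dotZr (dotC g b) -/B -/G -/D; ring.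
have /eqP : u = 0.
  apply/eqP; rewrite -dot_self_eq0 eq_le dot_self_ge0 andbT uu.
  by rewrite pmulr_rle0 // subr_le0.
rewrite subr_eq0 => /eqP/(congr1 ( *:%R B^-1)).
by rewrite !scalerA mulVf ?lt0r_neq0 // scale1r mulrC.
Qed.

Section Rank2.
Variables (R : realType) (n : nat) (Phi : seq 'rV[R]_n).
Hypothesis rsPhi : root_system Phi.

Lemma dot_roots_lt (b g : 'rV[R]_n) : b \in Phi -> g \in Phi -> g != b -> g != - b ->
  dot b g ^+ 2 < dot b b * dot g g.
Proof.
move=> bPhi gPhi gb gNb; rewrite ltNge; apply/negP=> /(dot_sqr_eq (root_neq0 rsPhi bPhi)) gE.
case: rsPhi => _ _ _ _ /(_ b (dot b g / dot b b) bPhi); rewrite -gE => /(_ gPhi)[] c1.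
  by move: gb; rewrite gE c1 scale1r eqxx.
by move: gNb; rewrite gE c1 scaleN1r eqxx.
Qed.

Lemma cartan_pair (b g : 'rV[R]_n) : b \in Phi -> g \in Phi -> g != b -> g != - b ->
  exists za zb : int, [/\ cartan g b = za%:~R, cartan b g = zb%:~R & za * zb < 4].
Proof.
move=> bPhi gPhi gb gNb; case: (rsPhi) => _ _ _ cartan_int _.
have [za Eza] := cartan_int g b gPhi bPhi; have [zb Ezb] := cartan_int b g bPhi gPhi.
exists za, zb; split=> //; rewrite -(ltr_int R) intrM -Eza -Ezb.
have Bp : 0 < dot b b by rewrite dot_self_gt0 (root_neq0 rsPhi bPhi).
have Gp : 0 < dot g g by rewrite dot_self_gt0 (root_neq0 rsPhi gPhi).
have lt_bg := dot_roots_lt bPhi gPhi gb gNb.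
have -> : 2 * dot b g / dot g g * (2 * dot g b / dot b b) =
          4 * (dot b g ^+ 2 / (dot b b * dot g g)).
  by rewrite (dotC g b); field; rewrite !lt0r_neq0.
by rewrite -[X in _ < X]mulr1 ltr_pM2l // ltr_pdivrMr ?mulr_gt0 // mul1r.
Qed.

End Rank2.

Lemma sign_count_diag (R : realFieldType) (x : R) e f :
  x != 0 -> sign_count (dihedral_data 2 2 1) x x e f = orbit_profile 1 false e f.
Proof.
rewrite (_ : dihedral_data 2 2 1 = [:: ((1, 0), (0, 1)); ((-1, 0), (-2, 1))]); last by vm_compute.
rewrite /sign_count /linform /has_sign /= !mul1r !mul0r !addr0 !add0r mulN1r.
rewrite (_ : (-2)%:~R * x + x = - x); last by ring.
rewrite oppr_gt0 oppr_lt0 neq_lt => /orP[x_lt0 | x_gt0].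
  by rewrite x_lt0 (lt_gtF x_lt0); case: e; case: f.
by rewrite x_gt0 (lt_gtF x_gt0); case: e; case: f.
Qed.

Definition count_relations (R : numDomainType) (k : nat) (d : R) (distinct : bool)
    (c : bool -> bool -> nat) : Prop :=
  [/\ c true true = c false false, c true false = c false true,
      distinct -> 0 <= d -> c true true = ((k - 1) * c true false)%N,
      distinct -> d <= 0 -> c true false = ((k - 1) * c true true)%N
    & c true true = c true false <-> d = 0].

Lemma orbit_profile_relations (R : realDomainType) (k : nat) (acute : bool) (d : R) :
  (0 < d -> acute) -> (d < 0 -> ~~ acute) -> (k == 2) = (d == 0) ->
  count_relations k d true (orbit_profile k acute).
Proof.
move=> d_gt0 d_lt0 k2; split=> //.
- rewrite /orbit_profile /= subn1 le_eqVlt.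
  move=> _ /orP[/eqP d0 | /d_gt0 ->]; last by rewrite muln1.
  have /eqP-> : k == 2 by rewrite k2 -d0.
  by case: (acute).
- rewrite /orbit_profile /= subn1 le_eqVlt.
  move=> _ /orP[/eqP d0 | /d_lt0 /negbTE->]; last by rewrite muln1.
  have /eqP-> : k == 2 by rewrite k2 d0.
  by case: (acute).
- have E : (orbit_profile k acute true true == orbit_profile k acute true false) = (d == 0).
    by rewrite -k2 /orbit_profile /=; case: (acute); case: k {k2} => [|[|[]]].
  by split=> /eqP; [rewrite E | rewrite -E] => /eqP.
Qed.

Lemma diag_relations (R : numDomainType) (d : R) :
  d != 0 -> count_relations 1 d false (orbit_profile 1 false).
Proof. by move=> d0; split=> //; split=> // /eqP; rewrite (negbTE d0). Qed.

Lemma eq_scaled (L N c1 c2 d1 d2 m : nat) : (0 < L)%N -> (0 < N)%N ->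
  (L * c1 = N * d1)%N -> (L * c2 = N * d2)%N -> (c1 = m * c2)%N <-> (d1 = m * d2)%N.
Proof.
move=> L_gt0 N_gt0 E1 E2; split=> E.
  by apply/eqP; rewrite -(eqn_pmul2l N_gt0) mulnCA -E1 -E2 E mulnCA.
by apply/eqP; rewrite -(eqn_pmul2l L_gt0) mulnCA E1 E2 E mulnCA.
Qed.

Lemma scaled_relations (R : numDomainType) k (d : R) distinct (L N : nat)
    (c cnt : bool -> bool -> nat) :
  (0 < L)%N -> (0 < N)%N -> (forall e f, L * c e f = N * cnt e f)%N ->
  count_relations k d distinct cnt -> count_relations k d distinct c.
Proof.
move=> L_gt0 N_gt0 E [Ett Etf Eacute Eobtuse Eortho].
have Eq e f e' f' m := eq_scaled m L_gt0 N_gt0 (E e f) (E e' f').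
have Eq1 e f e' f' : c e f = c e' f' <-> cnt e f = cnt e' f'.
  by have := Eq e f e' f' 1%N; rewrite !mul1n.
split.
- exact/Eq1.
- exact/Eq1.
- by move=> dist d_ge0; apply/Eq; exact: Eacute.
- by move=> dist d_le0; apply/Eq; exact: Eobtuse.
- by rewrite -Eortho; exact: Eq1.
Qed.

Lemma orbit_sign_count (R : realType) (n : nat) (Phi : seq 'rV[R]_n) (t b g : 'rV[R]_n) :
  root_system Phi -> regular Phi t -> posroot Phi t b -> posroot Phi t g ->
  exists k (cnt : bool -> bool -> nat),
  [/\ is_order (refl_mx b *m refl_mx g) k,
      forall w, in_W Phi w -> forall e f,
        count (fun d => `[< Wsign Phi t e f b g (dword b g d *m w) >]) (dihedral_words k)
        = cnt e f
    & count_relations k (dot b g) (b != g) cnt].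
Proof.
move=> rsPhi reg /andP[bPhi b_pos] /andP[gPhi g_pos].
have b0 := root_neq0 rsPhi bPhi; have g0 := root_neq0 rsPhi gPhi.
have [-> | gb] := eqVneq g b.
  have E2 : cartan b b = (2 : int)%:~R by rewrite cartan_id.
  exists 1%N, (orbit_profile 1 false); split.
  - split=> // [|j /andP[j_gt0 j_lt1]]; first by rewrite /= mulmx1 refl_mxK.
    by move: j_lt1; rewrite ltnS leqNgt j_gt0.
  - move=> w Ww e f; rewrite (count_orbit_Wsign t rsPhi bPhi bPhi E2 E2) //.
    by apply: sign_count_diag; rewrite reg ?root_mulmx_W.
  - by apply: diag_relations; rewrite dot_self_eq0.
have gNb : g != - b by apply: contraTneq g_pos => ->; rewrite dotNr oppr_gt0 -leNgt ltW.
have [za [zb [Eza Ezb prod_lt4]]] := cartan_pair rsPhi bPhi gPhi gb gNb.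
have sgz_za : sgz za = sgz (dot b g) by rewrite -(sgz_int R) -Eza sgz_cartan.
have sgz_zb : sgz zb = sgz (dot b g) by rewrite -(sgz_int R) -Ezb sgz_cartan // dotC.
have rc : rank2_case za zb (dihedral_order (za * zb)) (0 < za).
  apply: rank2_cases => //.
    by rewrite -[0 < za]sgz_gt0 -[0 < zb]sgz_gt0 sgz_za sgz_zb.
  by rewrite -[za < 0]sgz_lt0 -[zb < 0]sgz_lt0 sgz_za sgz_zb.
exists (dihedral_order (za * zb)), (orbit_profile (dihedral_order (za * zb)) (0 < za)); split.
- exact: (is_order_check b0 g0 Eza Ezb (proj1 rc)).
- exact: orbit_count_rank2 rc.
- apply: orbit_profile_relations => [d_gt0 | d_lt0 |].
  + by rewrite -sgz_gt0 sgz_za sgz_gt0.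
  + by rewrite -leNgt ltW // -sgz_lt0 sgz_za sgz_lt0.
  + rewrite dihedral_order_eq2 mulf_eq0 -[za == 0]sgz_eq0 -[zb == 0]sgz_eq0.
    by rewrite sgz_za sgz_zb orbb sgz_eq0.
Qed.

Lemma perm_dword_weyl (R : realType) (n : nat) (Phi : seq 'rV[R]_n) (b g : 'rV[R]_n)
    (s : seq 'M[R]_n) d :
  root_system Phi -> b \in Phi -> g \in Phi ->
  uniq s -> (forall w, w \in s <-> in_W Phi w) ->
  perm_eq [seq dword b g d *m w | w <- s] s.
Proof.
move=> rsPhi bPhi gPhi s_uniq sE.
have b0 := root_neq0 rsPhi bPhi; have g0 := root_neq0 rsPhi gPhi.
have dW d' : in_W Phi (dword b g d') by exact: in_W_dword.
apply: uniq_perm => //.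
  rewrite map_inj_uniq // => w1 w2 /(congr1 (mulmx (dword b g (rev d)))).
  by rewrite !mulmxA dword_revK // !mul1mx.
move=> w; apply/mapP/idP=> [[w' /sE w'W ->] | /sE wW].
  by apply/sE; exact: in_W_mulmx.
exists (dword b g (rev d) *m w); first by apply/sE; exact: in_W_mulmx.
by rewrite mulmxA dword_revKV // mul1mx.
Qed.

Theorem proposition3p5 (R : realType) (n : nat) (Phi : seq 'rV[R]_n)
  (t beta gamma : 'rV[R]_n) :
  root_system Phi -> regular Phi t ->
  posroot Phi t beta -> posroot Phi t gamma ->
  exists pp mm pm mp : nat,
    [/\ [/\ has_card (Wsign Phi t true true beta gamma) pp,
            has_card (Wsign Phi t false false beta gamma) mm,
            has_card (Wsign Phi t true false beta gamma) pm
          & has_card (Wsign Phi t false true beta gamma) mp],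
        pp = mm /\ pm = mp,
        (exists k : nat, is_order (refl_mx beta *m refl_mx gamma) k /\
           (beta <> gamma ->
              (0 <= dot beta gamma -> pp = ((k - 1) * pm)%N) /\
              (dot beta gamma <= 0 -> pm = ((k - 1) * pp)%N)))
      & ([/\ pp = mm, mm = pm & pm = mp] <-> dot beta gamma = 0)].
Proof.
move=> rsPhi reg pos_b pos_g.
have [/andP[bPhi _] /andP[gPhi _]] := conj pos_b pos_g.
have [SW [SW_uniq SWE]] := weyl_enum rsPhi.
have [k [cnt [ord orbit_cnt rels]]] := orbit_sign_count rsPhi reg pos_b pos_g.
pose c e f := count (fun w => `[< Wsign Phi t e f beta gamma w >]) SW.
have SW_gt0 : (0 < size SW)%N.
  by rewrite lt0n size_eq0; apply/eqP=> SW0; have /SWE := inW1 Phi; rewrite SW0.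
have k_gt0 : (0 < k)%N by case: ord.
have scaled e f : (size (dihedral_words k) * c e f = size SW * cnt e f)%N.
  apply: (double_count (act := fun d w => dword beta gamma d *m w)) => // [d _ | w /SWE].
    exact: perm_dword_weyl d rsPhi bPhi gPhi SW_uniq SWE.
  by move=> /orbit_cnt->.
have L_gt0 : (0 < size (dihedral_words k))%N by rewrite size_dihedral_words // muln_gt0.
have [Ett Etf Eacute Eobtuse Eortho] := scaled_relations L_gt0 SW_gt0 scaled rels.
exists (c true true), (c false false), (c true false), (c false true); split=> //.
- by split; apply: has_card_count => // w [/SWE].
- by exists k; split=> // /eqP bg; split; [exact: Eacute | exact: Eobtuse].
- rewrite -Eortho; split=> [[-> ->] // | E].
  by split; rewrite -?Ett -?Etf.
Qed.
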